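(* Let $a, w \in \mathbb{R}$ with $w < -|a|$, and let $\tau_c(a,w) := \frac{1}{\sqrt{w^2-a^2}}\arccos(a/w)$. Then $\tau_c(a,w) > 1$ if and only if $a > -1$ and $-R(-a) < w$.
   Context: $\arccos:[-1,1]\to[0,\pi]$. $C(\theta) := \theta\cot\theta$ for $\theta\in(0,\pi)$ is a strictly decreasing bijection from $(0,\pi)$ onto $(-\infty,1)$ with inverse $C^{-1}$; $R(r) := C^{-1}(r)/\sin C^{-1}(r)$ for $r<1$. *)

From Stdlib Require Import Reals Lra ClassicalEpsilon.
Open Scope R_scope.

Definition Cfun (t : R) : R := t * cos t / sin t.

(** C^{-1}(r): the (unique, for r < 1) theta in (0,pi) with C theta = r.
    Chosen by Hilbert's epsilon; only meaningful for r < 1. *)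
Definition Cinv (r : R) : R :=
  epsilon (inhabits 0) (fun t => 0 < t < PI /\ Cfun t = r).

Definition Rfun (r : R) : R := Cinv r / sin (Cinv r).

Definition tau_c (a w : R) : R := acos (a / w) / sqrt (w ^ 2 - a ^ 2).

From Pilot Require Import Defs.
From Stdlib Require Import Reals Lra Psatz ClassicalEpsilon.
From Coquelicot Require Import Coquelicot.
Open Scope R_scope.

(* Put m := -w > 0 and theta := arccos (a/w) in (0,pi); then
   a = -m cos theta and sqrt (w^2 - a^2) = m sin theta, so
   tau_c a w = S theta / m with S t := t / sin t, and tau_c a w > 1 iff
   m < S theta.  On the other side R r = S (C^{-1} r), so the right-hand
   condition reads  m cos theta < 1 /\ m < S phi  with phi := C^{-1} (m cos theta).
   Since C t = S t * cos t, the defining equation C phi = m cos theta together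
   with the strict monotonicity of C and cos on (0,pi) forces m - S theta and
   m - S phi to have the same sign (lemma [same_side_of_m]). *)

(* S t = t / sin t, so that C t = S t * cos t and R r = S (C^{-1} r). *)
Definition Sfun (t : R) : R := t / sin t.

Lemma Cfun_Sfun t : 0 < t < PI -> Cfun t = Sfun t * cos t.
Proof.
  intros Ht. assert (0 < sin t) by (apply sin_gt_0; lra).
  unfold Cfun, Sfun. field. lra.
Qed.

(* t cos t < sin t on (0,pi): the derivative of sin t - t cos t is t sin t > 0. *)
Lemma tcos_lt_sin t : 0 < t < PI -> t * cos t < sin t.
Proof.
  intros Ht.
  destruct (MVT_cor2 (fun t => sin t - t * cos t) (fun t => t * sin t) 0 t)
    as [c [Hmvt Hc]].
  - lra.
  - intros c _. apply is_derive_Reals. auto_derive; auto. ring.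
  - rewrite sin_0, cos_0 in Hmvt.
    assert (0 < sin c) by (apply sin_gt_0; lra).
    assert (0 < c * sin c * (t - 0)) by (apply Rmult_lt_0_compat; nra).
    lra.
Qed.

Lemma Cfun_lt_1 t : 0 < t < PI -> Cfun t < 1.
Proof.
  intros Ht. assert (0 < sin t) by (apply sin_gt_0; lra).
  pose proof (tcos_lt_sin t Ht). unfold Cfun.
  apply (Rmult_lt_reg_r (sin t)); [lra|]. field_simplify; lra.
Qed.

(* C is strictly decreasing on (0,pi): C' t = (sin t cos t - t) / sin^2 t < 0. *)
Lemma Cfun_decreasing x y : 0 < x -> x < y -> y < PI -> Cfun y < Cfun x.
Proof.
  intros Hx Hxy Hy.
  destruct (MVT_cor2 Cfun (fun t => (sin t * cos t - t) / sin t ^ 2) x y)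
    as [c [Hmvt Hc]].
  - lra.
  - intros c Hc. assert (0 < sin c) by (apply sin_gt_0; lra).
    apply is_derive_Reals. unfold Cfun. auto_derive; [lra|].
    pose proof (sin2_cos2 c) as SC. unfold Rsqr in SC.
    field_simplify; [|lra|lra]. f_equal.
    replace (cos c ^ 2) with (1 - sin c ^ 2) by (simpl; lra). ring.
  - assert (0 < sin c) by (apply sin_gt_0; lra).
    assert (sin c < c) by (apply sin_lt_x; lra).
    pose proof (COS_bound c).
    assert (Hd : (sin c * cos c - c) / sin c ^ 2 < 0).
    { apply Rdiv_neg_pos; [nra | apply pow_lt; lra]. }
    assert ((sin c * cos c - c) / sin c ^ 2 * (y - x) < 0)
      by (apply Rmult_neg_pos; lra).
    lra.
Qed.

(* The zeros in (0,pi) of t cos t - r sin t are the solutions of C t = r;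
   by the intermediate value theorem, a sign change on [t0,t1] yields one. *)
Lemma Cfun_hits_between r t0 t1 : 0 < t0 -> t0 <= t1 -> t1 < PI ->
  0 <= t0 * cos t0 - r * sin t0 -> t1 * cos t1 - r * sin t1 <= 0 ->
  exists t, 0 < t < PI /\ Cfun t = r.
Proof.
  intros H0 H01 H1 Ht0 Ht1.
  set (H := fun t => t * cos t - r * sin t).
  assert (HC : continuity H) by (unfold H; reg).
  destruct (IVT_cor H t0 t1 HC H01 ltac:(unfold H; nra)) as [z [Hz Ez]].
  exists z. split; [lra|].
  assert (0 < sin z) by (apply sin_gt_0; lra).
  assert (Hz' : z * cos z = r * sin z) by (unfold H in Ez; lra).
  unfold Cfun. rewrite Hz'. field. lra.
Qed.

(* C maps (0,pi) onto (-oo,1): for r >= 0 the sign change happens on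
   [acos r, pi/2], for r < 0 on [pi/2, pi/2 + atan (-r)]. *)
Lemma Cfun_surjective r : r < 1 -> exists t, 0 < t < PI /\ Cfun t = r.
Proof.
  intros Hr. pose proof PI_RGT_0 as HPI.
  destruct (Rle_lt_dec 0 r) as [Hr0 | Hr0].
  - (* At acos r, t cos t - r sin t equals r (acos r - sin (acos r)) >= 0. *)
    destruct (acos_bound_lt r ltac:(lra)) as [A0 A1].
    assert (Ca : cos (acos r) = r) by (apply cos_acos; lra).
    assert (acos r <= PI / 2).
    { destruct (Rle_lt_dec (acos r) (PI / 2)) as [|Hlt]; [auto|].
      pose proof (cos_decreasing_1 (PI / 2) (acos r) ltac:(lra) ltac:(lra)
                    ltac:(lra) ltac:(lra) Hlt).
      rewrite cos_PI2 in *. lra. }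
    apply (Cfun_hits_between r (acos r) (PI / 2)); try lra.
    + rewrite Ca. pose proof (sin_lt_x (acos r) A0). nra.
    + rewrite cos_PI2, sin_PI2. lra.
  - (* With K = -r, at pi/2 + atan K it equals -(pi/2 + atan K - 1) K / sqrt (1 + K^2) < 0. *)
    set (K := - r).
    assert (HK : 0 < K) by (unfold K; lra).
    pose proof (atan_bound K).
    assert (0 < atan K) by (rewrite <- atan_0; apply atan_increasing; lra).
    assert (Hq : 0 < sqrt (1 + K²)) by (apply sqrt_lt_R0; unfold Rsqr; nra).
    apply (Cfun_hits_between r (PI / 2) (PI / 2 + atan K)); try lra.
    + rewrite cos_PI2, sin_PI2. lra.
    + rewrite <- cos_sin, cos_atan.
      replace (cos (PI / 2 + atan K)) with (- sin (atan K))
        by (rewrite (sin_cos (atan K)); ring).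
      rewrite sin_atan.
      assert (1 < PI / 2 + atan K) by (pose proof PI2_1; lra).
      assert (0 <= (PI / 2 + atan K - 1) * K / sqrt (1 + K²))
        by (apply Rdiv_le_0_compat; nra).
      replace r with (- K) by (unfold K; ring).
      replace ((PI / 2 + atan K) * - (K / sqrt (1 + K²)) - - K * (1 / sqrt (1 + K²)))
        with (- ((PI / 2 + atan K - 1) * K / sqrt (1 + K²))) by (field; lra).
      lra.
Qed.

Lemma Cinv_spec r : r < 1 -> 0 < Defs.Cinv r < PI /\ Cfun (Defs.Cinv r) = r.
Proof.
  intros Hr. unfold Defs.Cinv.
  apply (epsilon_spec (inhabits 0) (fun t => 0 < t < PI /\ Cfun t = r)).
  now apply Cfun_surjective.
Qed.

Lemma Cfun_cos_comonotone x y : 0 < x < PI -> 0 < y < PI -> x <> y ->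
  0 < (Cfun x - Cfun y) * (cos x - cos y).
Proof.
  intros Hx Hy Hxy.
  destruct (Rtotal_order x y) as [L | [E | L]]; [| contradiction |].
  - pose proof (Cfun_decreasing x y ltac:(lra) L ltac:(lra)).
    pose proof (cos_decreasing_1 x y ltac:(lra) ltac:(lra) ltac:(lra) ltac:(lra) L).
    nra.
  - pose proof (Cfun_decreasing y x ltac:(lra) L ltac:(lra)).
    pose proof (cos_decreasing_1 y x ltac:(lra) ltac:(lra) ltac:(lra) ltac:(lra) L).
    nra.
Qed.

(* Sign transfer: if C phi = m cos theta then m < S theta iff m < S phi.
   Indeed C theta - C phi = cos theta (S theta - m) and
   m (cos theta - cos phi) = cos phi (S phi - m), and cos theta, cos phi
   have the same sign. *)
Lemma same_side_of_m m th ph : 0 < m -> 0 < th < PI -> 0 < ph < PI ->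
  Cfun ph = m * cos th -> (m < Sfun th <-> m < Sfun ph).
Proof.
  intros Hm Hth Hph E.
  destruct (Req_dec th ph) as [<- | Hne]; [tauto|].
  pose proof (Cfun_cos_comonotone th ph Hth Hph Hne) as Hmono.
  rewrite Cfun_Sfun in E, Hmono by lra. rewrite Cfun_Sfun in Hmono by lra.
  set (u := cos th) in *. set (v := cos ph) in *.
  set (H := Sfun th) in *. set (G := Sfun ph) in *.
  assert (0 < G) by (unfold G, Sfun; pose proof (sin_gt_0 ph); apply Rdiv_lt_0_compat; lra).
  assert (Hprod : 0 < (u * v) * ((H - m) * (G - m))).
  { replace ((u * v) * ((H - m) * (G - m))) with ((H * u - m * u) * (G * v - m * v))
      by ring.
    rewrite E in Hmono |- *. nra. }
  assert (Huv : 0 <= u * v).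
  { assert (0 <= (m * u) * v) by (rewrite <- E; nra). nra. }
  assert (0 < (H - m) * (G - m)) by nra.
  split; intro; nra.
Qed.

(* If 0 <= m < S t then m cos t < 1: either cos t <= 0, or m cos t < S t cos t = C t < 1.
   This is what makes C^{-1} (m cos theta) available in the forward direction. *)
Lemma below_Sfun_cos_lt_1 m t : 0 <= m -> 0 < t < PI -> m < Sfun t -> m * cos t < 1.
Proof.
  intros Hm Ht Hlt. pose proof (Cfun_lt_1 t Ht) as HC. rewrite Cfun_Sfun in HC by lra.
  destruct (Rle_lt_dec (cos t) 0); nra.
Qed.

Lemma polar_form a w : w < - Rabs a ->
  let th := acos (a / w) in
  0 < th < PI /\ - a = - w * cos th /\ sqrt (w ^ 2 - a ^ 2) = - w * sin th.
Proof.
  intros hw th.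
  pose proof (Rle_abs a). pose proof (Rle_abs (- a)).
  rewrite Rabs_Ropp in *.
  assert (Hs : -1 < a / w < 1).
  { assert (Ediv : a = a / w * w) by (field; lra).
    split; nra. }
  destruct (acos_bound_lt _ Hs) as [Hth0 Hth1]; fold th in Hth0, Hth1.
  assert (Cth : cos th = a / w) by (apply cos_acos; lra).
  assert (0 < sin th) by (apply sin_gt_0; lra).
  assert (Ea : - a = - w * cos th) by (rewrite Cth; field; lra).
  split; [lra | split; [exact Ea |]].
  rewrite <- (sqrt_pow2 (- w * sin th)) by nra. f_equal.
  pose proof (sin2_cos2 th) as SC. unfold Rsqr in SC.
  replace (a ^ 2) with ((- a) ^ 2) by ring. rewrite Ea. nra.
Qed.

Theorem mainTheorem8 (a w : R) (hw : w < - Rabs a) :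
  tau_c a w > 1 <-> (a > -1 /\ - Rfun (- a) < w).
Proof.
  destruct (polar_form a w hw) as [Hth [Ea Esq]].
  set (th := acos (a / w)) in *. set (m := - w) in *.
  assert (Hm : 0 < m) by (pose proof (Rabs_pos a); unfold m; lra).
  assert (Hsin : 0 < sin th) by (apply sin_gt_0; lra).
  assert (Htau : tau_c a w > 1 <-> m < Sfun th).
  { unfold tau_c. fold th. rewrite Esq. unfold Sfun.
    replace (th / (m * sin th)) with (th / sin th / m) by (field; lra).
    split; intro Hlt.
    - apply Rgt_lt, Rlt_div_r in Hlt; lra.
    - apply Rlt_gt, Rlt_div_r; lra. }
  rewrite Htau.
  split.
  - intro Hlt. pose proof (below_Sfun_cos_lt_1 m th ltac:(lra) Hth Hlt).
    destruct (Cinv_spec (- a) ltac:(lra)) as [Hph Eph].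
    split; [lra|]. enough (m < Rfun (- a)) by (unfold m in *; lra).
    apply (same_side_of_m m th); [lra | lra | lra | lra | exact Hlt].
  - intros [Ha Hw].
    destruct (Cinv_spec (- a) ltac:(lra)) as [Hph Eph].
    apply (same_side_of_m m th (Defs.Cinv (- a))); [lra | lra | lra | lra |].
    change (m < Rfun (- a)). unfold m. lra.
Qed.
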